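(* Let $G$ be a finite simple graph with $|E(G)| \le 2|V(G)| - 1$ and minimum degree $\delta(G) \ge 2$. Then there exists a vertex $v$ of $G$, with $k = \deg(v)$, such that at least one of the following holds: (B1) $k = 2$; (B2) $k = 3$ and at least two neighbours of $v$ have degree at most $4$; (B3) $k = 5$ and at least three neighbours of $v$ have degree at most $3$; (B4) $k = 6$ and at least five neighbours of $v$ have degree at most $3$; (B5) $k \ge 7$ and all $k$ neighbours of $v$ have degree at most $3$. *)

From mathcomp Require Import all_boot.
Set Implicit Arguments. Unset Strict Implicit. Unset Printing Implicit Defensive.

Definition simple_graph (T : finType) (e : rel T) : Prop :=
  symmetric e /\ irreflexive e.

Definition nbhd (T : finType) (e : rel T) (v : T) : {set T} := [set u | e v u].
Definition deg (T : finType) (e : rel T) (v : T) : nat := #|nbhd e v|.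
Definition edges (T : finType) (e : rel T) : {set {set T}} :=
  [set [set x; y] | x in T, y in T & e x y].

From mathcomp Require Import all_boot zify.

Set Implicit Arguments.
Unset Strict Implicit.
Unset Printing Implicit Defensive.

(* Discharging.  Give each vertex of degree k the charge 2k - 8; by the
   handshake lemma the total charge is 4|E| - 8|V| < 0.  Let every vertex of
   degree at most 3 receive one unit from each neighbour of degree at least 5.
   If no vertex satisfies (B1)-(B5), all degrees are at least 3 and every final
   charge is nonnegative: a vertex of degree 3 has at least two neighbours of
   degree at least 5, and a vertex of degree 5, 6 or k >= 7 gives away at most
   2, 4 or k - 1 units.  Summing the final charges gives a contradiction. *)

(* (B1)-(B5) at a vertex of degree k having l3 (resp. l4) neighbours of degree
   at most 3 (resp. 4). *)
Definition configuration (k l3 l4 : nat) : bool :=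
  [|| k == 2, (k == 3) && (2 <= l4), (k == 5) && (3 <= l3),
      (k == 6) && (5 <= l3) | (7 <= k) && (l3 == k)].

Lemma configurationP k l3 l4 :
  reflect (k = 2 \/ (k = 3 /\ 2 <= l4) \/ (k = 5 /\ 3 <= l3) \/
           (k = 6 /\ 5 <= l3) \/ (7 <= k /\ l3 = k))
          (configuration k l3 l4).
Proof. by apply: (iffP idP); rewrite /configuration; lia. Qed.

(* 2k - 8 + received - sent >= 0, with the subtractions moved across. *)
Lemma final_charge_nonneg k l3 l4 h :
  2 <= k -> l3 <= k -> k = l4 + h -> ~~ configuration k l3 l4 ->
  8 + (if 5 <= k then l3 else 0) <= 2 * k + (if k <= 3 then h else 0).
Proof. rewrite /configuration; case: ifP; case: ifP; lia. Qed.

Lemma card_set_sum (T : finType) (A : {pred T}) (P : pred T) :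
  #|[set x in A | P x]| = \sum_(x in A) P x.
Proof.
rewrite -sum1_card big_mkcond [RHS]big_mkcond; apply: eq_bigr => x _.
by rewrite inE; case: (x \in A); case: (P x).
Qed.

Section Graph.

Variables (T : finType) (e : rel T).
Hypotheses (e_sym : symmetric e) (e_irr : irreflexive e).

Lemma card_edge E : E \in edges e -> #|E| = 2.
Proof.
case/imset2P => x y _; rewrite inE => exy ->.
by rewrite cards2; case: eqVneq exy => // ->; rewrite e_irr.
Qed.

Lemma edges_at v :
  [set E in edges e | v \in E] = [set [set v; u] | u in nbhd e v].
Proof.
apply/setP => E; rewrite !inE; apply/andP/imsetP => [[]|[u]].
  case/imset2P => x y _; rewrite inE => exy -> /set2P[]->.
    by exists y; rewrite // /nbhd inE.
  by exists x; rewrite 1?setUC // /nbhd inE e_sym.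
rewrite /nbhd inE => evu ->; split; last by rewrite !inE eqxx.
by apply/imset2P; exists v u; rewrite ?inE.
Qed.

Lemma deg_edges_at v : deg e v = #|[set E in edges e | v \in E]|.
Proof.
rewrite edges_at card_in_imset // => u w; rewrite !inE => evu _ /setP/(_ u).
rewrite !inE eqxx orbT => /esym/orP[/eqP uv | /eqP //].
by move: evu; rewrite uv e_irr.
Qed.

Lemma sum_deg : \sum_v deg e v = 2 * #|edges e|.
Proof.
under eq_bigr do rewrite deg_edges_at card_set_sum.
rewrite exchange_big /= mulnC -sum_nat_const.
apply: eq_bigr => E /card_edge <-.
rewrite -sum1_card [RHS]big_mkcond; apply: eq_bigr => v _.
by case: (v \in E).
Qed.

Definition low_nbhd v d : {set T} := [set u in nbhd e v | deg e u <= d].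

Lemma card_low_nbhd_le_deg v d : #|low_nbhd v d| <= deg e v.
Proof. by apply/subset_leq_card/subsetP => u; rewrite inE => /andP[]. Qed.

Lemma deg_low_high v d :
  deg e v = #|low_nbhd v d| + #|[set u in nbhd e v | d < deg e u]|.
Proof.
rewrite /deg -(cardsID [set u | deg e u <= d] (nbhd e v)).
by congr (_ + _); apply: eq_card => u; rewrite !inE 1?ltnNge 1?andbC.
Qed.

Definition gift u v : bool := [&& e u v, deg e u <= 3 & 5 <= deg e v].

Lemma gifts_received v :
  \sum_u gift v u =
    if deg e v <= 3 then #|[set u in nbhd e v | 4 < deg e u]| else 0.
Proof.
case: ifP => low_v; last by apply: big1 => u _; rewrite /gift low_v andbF.
rewrite card_set_sum [RHS]big_mkcond; apply: eq_bigr => u _.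
by rewrite /gift /nbhd low_v inE; case: (e v u).
Qed.

Lemma gifts_sent v :
  \sum_u gift u v = if 5 <= deg e v then #|low_nbhd v 3| else 0.
Proof.
case: ifP => high_v; last by apply: big1 => u _; rewrite /gift high_v !andbF.
rewrite card_set_sum [RHS]big_mkcond; apply: eq_bigr => u _.
by rewrite /gift /nbhd high_v inE e_sym andbT; case: (e v u).
Qed.

Lemma charge_nonneg v :
  2 <= deg e v -> ~~ configuration (deg e v) #|low_nbhd v 3| #|low_nbhd v 4| ->
  8 + \sum_u gift u v <= 2 * deg e v + \sum_u gift v u.
Proof.
rewrite gifts_sent gifts_received => deg_v.
exact: final_charge_nonneg deg_v (card_low_nbhd_le_deg v 3) (deg_low_high v 4).
Qed.

End Graph.

Theorem lemma4 (T : finType) (e : rel T) :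
  simple_graph e ->
  #|edges e| + 1 <= 2 * #|T| ->
  (forall v : T, 2 <= deg e v) ->
  exists v : T,
    let k := deg e v in
    let low d := #|[set u in nbhd e v | deg e u <= d]| in
    k = 2 \/
    (k = 3 /\ 2 <= low 4) \/
    (k = 5 /\ 3 <= low 3) \/
    (k = 6 /\ 5 <= low 3) \/
    (7 <= k /\ low 3 = k).
Proof.
move=> [e_sym e_irr] few_edges min_deg.
case: (boolP [exists v, configuration (deg e v)
                          #|low_nbhd e v 3| #|low_nbhd e v 4|]).
  by case/existsP => v /configurationP; exists v.
move/existsPn => no_config; exfalso.
have gifts_balance : \sum_v \sum_u gift e u v = \sum_v \sum_u gift e v u.
  by rewrite exchange_big.
have : \sum_v (8 + \sum_u gift e u v) <= \sum_v (2 * deg e v + \sum_u gift e v u).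
  apply: leq_sum => v _; exact (charge_nonneg e_sym (min_deg v) (no_config v)).
rewrite [X in X <= _]big_split [X in _ <= X]big_split /= -big_distrr /= sum_deg //.
rewrite gifts_balance sum_nat_const -[#|xpredT|]/#|T|.
lia.
Qed.
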